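(* Let $F$ be a finite non-abelian group and let $L=F\wr\mathbb{Z}=\left(\bigoplus_{i\in\mathbb{Z}}F\right)\rtimes\mathbb{Z}$, where $\mathbb{Z}$ acts by shifting coordinates. Then $L$ does not embed (as a subgroup) in $\mathrm{IET}$.
   Context: $\mathrm{IET}$ denotes the group of interval exchange transformations of $[0,1)$: bijections of $[0,1)$ that are orientation-preserving piecewise isometries (piecewise translations), left-continuous, with finitely many discontinuity points. *)

From mathcomp Require Import all_boot fingroup.
From Stdlib Require Import Reals ZArith.

Set Implicit Arguments.
Unset Strict Implicit.
Unset Printing Implicit Defensive.

Open Scope R_scope.

Definition is_IET (f : R -> R) : Prop :=
  (forall x, 0 <= x < 1 -> 0 <= f x < 1) /\
  (forall x y, 0 <= x < 1 -> 0 <= y < 1 -> f x = f y -> x = y) /\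
  (forall y, 0 <= y < 1 -> exists x, 0 <= x < 1 /\ f x = y) /\
  exists (n : nat) (a t : nat -> R),
    a 0%nat = 0 /\ a n = 1 /\
    (forall i, (i < n)%nat -> a i < a (S i)) /\
    (forall i x, (i < n)%nat -> a i < x <= a (S i) -> x < 1 -> f x = x + t i).

(** Elements of the wreath product F wr Z = (⊕_{i∈Z} F) ⋊ Z are pairs (f, m)
    with f : Z -> F finitely supported and m : Z. *)
Definition finsupp (gT : finGroupType) (f : Z -> gT) : Prop :=
  exists N : Z, forall i : Z, (N < Z.abs i)%Z -> f i = 1%g.

(** Z acts by shifting coordinates: (m . g) i = g (i - m).  Product:
    (f, m) * (g, n) = (f * (m . g), m + n). *)
Definition wr_mul_fun (gT : finGroupType) (f : Z -> gT) (m : Z) (g : Z -> gT)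
  : Z -> gT := fun i => (f i * g (i - m)%Z)%g.

Definition wreath_Z_embeds_in_IET (gT : finGroupType) : Prop :=
  exists phi : (Z -> gT) -> Z -> R -> R,
    (forall f m, finsupp f -> is_IET (phi f m)) /\
    (forall f m g n, finsupp f -> finsupp g ->
       forall x, 0 <= x < 1 ->
         phi (wr_mul_fun f m g) (m + n)%Z x = phi f m (phi g n x)) /\
    (forall f m g n, finsupp f -> finsupp g ->
       (forall x, 0 <= x < 1 -> phi f m x = phi g n x) ->
       (forall i, f i = g i) /\ m = n).

(* Suppose a and b in F do not commute, put g = [~ a, b], and write d_k(c) for the
   configuration carrying c at position k. By faithfulness the IET d_0(g) moves some
   point, hence every point of an interval (p, q]; its conjugate d_k(g) by the k-th
   power of the shift moves a translate of that interval, of the same length.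
   Counting grid points i/M, some x is moved by at least N(q - p)/2 of the lamps
   d_k(g), 0 <= k < N. If d_k(g) moves x, then either a cannot be completed at k
   by an element supported in [k, +oo) that fixes x, or b cannot be completed at k
   by one supported in (-oo, k]: otherwise the commutator of the two completions
   is d_k(g) and fixes x. For a set K of positions of the first kind, the products
   of the d_k(a) over the subsets of K send x to 2^|K| distinct points, whereas each
   of these points is x plus a sum of at most 3N translation lengths of the
   generators, so there are at most (3N + 1)^r of them. Exponential growth in N
   against polynomial growth is the contradiction. *)

From HB Require Import structures.
From Stdlib Require Import Reals ZArith Lra Lia FunctionalExtensionality ClassicalEpsilon.
From mathcomp Require Import all_boot fingroup zify.

Set Implicit Arguments.
Unset Strict Implicit.
Unset Printing Implicit Defensive.

Open Scope R_scope.

HB.instance Definition _ := hasDecEq.Build R (compareP Req_EM_T).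
HB.instance Definition _ := hasDecEq.Build Z (compareP Z.eq_dec).
HB.instance Definition _ := Monoid.isComLaw.Build R 0 Rplus
  (fun x y z => esym (Rplus_assoc x y z)) Rplus_comm Rplus_0_l.

Definition pdec (P : Prop) : bool :=
  if excluded_middle_informative P then true else false.

Lemma pdecP (P : Prop) : reflect P (pdec P).
Proof. by rewrite /pdec; case: excluded_middle_informative => H; constructor. Qed.

Lemma card_set_sum (T : finType) (P : pred T) : #|[set i | P i]| = (\sum_i P i)%N.
Proof.
by rewrite -sum1_card big_mkcond; apply: eq_bigr => i _; rewrite inE; case: (P i).
Qed.

Lemma card_int_interval (n : nat) (A B : R) : -1 <= A ->
  Rmin (INR n) B - A - 1 <= INR #|[set i : 'I_n | pdec (A < INR i <= B)]|.
Proof.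
move=> A_ge; rewrite card_set_sum; elim: n => [|n IH].
  by rewrite big_ord0 /Rmin; case: Rle_dec => /=; lra.
rewrite big_ord_recr plus_INR S_INR; set s := (\sum_(i < n) _)%N in IH *.
have := pos_INR n; have := pos_INR s.
move: IH; case: pdecP => /= [_ | out]; rewrite /Rmin; do 2 case: Rle_dec => //; try lra.
all: case: (Rle_lt_dec (INR n) A) => ? ?; try lra.
all: by case: out; lra.
Qed.

Lemma scale_interval (M u v x : R) : 0 < M -> (u < x / M <= v <-> M * u < x <= M * v).
Proof.
move=> M_gt0; set z := x / M; have -> : x = M * z by rewrite /z; field; lra.
by split=> -[? ?]; split; nra.
Qed.

Lemma card_grid_interval (M : nat) (u v : R) : (0 < M)%N -> 0 <= u -> v <= 1 ->
  INR M * (v - u) - 1 <= INR #|[set i : 'I_M | pdec (u < INR i / INR M <= v)]|.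
Proof.
move=> /ltP/lt_0_INR M_gt0 u_ge0 v_le1.
have -> : [set i : 'I_M | pdec (u < INR i / INR M <= v)] =
          [set i : 'I_M | pdec (INR M * u < INR i <= INR M * v)].
  by apply/setP => i; rewrite !inE; apply/pdecP/pdecP => /scale_interval; apply.
have := @card_int_interval M (INR M * u) (INR M * v) ltac:(nra).
rewrite Rmin_right; nra.
Qed.

Lemma grid_point_in01 (M : nat) (i : 'I_M) : 0 <= INR i / INR M < 1.
Proof.
move: (ltn_ord i) => /ltP/lt_INR iM; have i_ge0 := pos_INR i.
set z := INR i / INR M; have : INR i = INR M * z by rewrite /z; field; lra.
by split; nra.
Qed.

Definition clamp (p q x : R) : R := Rmin (Rmax x p) q.

Lemma clamp_interval p q u v y : p <= q ->
  clamp p q u < y <= clamp p q v -> u < y <= v /\ p < y <= q.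
Proof. by rewrite /clamp /Rmin /Rmax => ?; repeat case: Rle_dec; lra. Qed.

Lemma clamp_left p q x : x <= p <= q -> clamp p q x = p.
Proof. by rewrite /clamp /Rmin /Rmax => ?; repeat case: Rle_dec; lra. Qed.

Lemma clamp_right p q x : p <= q <= x -> clamp p q x = q.
Proof. by rewrite /clamp /Rmin /Rmax => ?; repeat case: Rle_dec; lra. Qed.

Lemma translate_interval_in01 (u v t : R) : u < v ->
  (forall y, u < y <= v -> 0 <= y + t < 1) -> 0 <= u + t /\ v + t < 1.
Proof.
move=> uv in01; split; last by have := in01 v; lra.
apply: Rnot_lt_le => neg.
have := Rmin_l (v - u) (- (u + t) / 2); have := Rmin_r (v - u) (- (u + t) / 2).
have : 0 < Rmin (v - u) (- (u + t) / 2) by apply: Rmin_glb_lt; lra.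
have := in01 (u + Rmin (v - u) (- (u + t) / 2)); lra.
Qed.

Lemma card_grid_translate (M : nat) (u v t : R) : (0 < M)%N ->
  (forall y, u < y <= v -> 0 <= y + t < 1) ->
  INR M * (v - u) - 1 <= INR #|[set i : 'I_M | pdec (u + t < INR i / INR M <= v + t)]|.
Proof.
move=> M_gt0 in01; have := pos_INR #|[set i : 'I_M | pdec (u + t < INR i / INR M <= v + t)]|.
case: (Rle_lt_dec v u) => [vu | uv].
  by have := Rmult_le_compat_l (INR M) _ _ (pos_INR M) vu; lra.
have [ut_ge0 vt_lt1] := translate_interval_in01 uv in01.
by have := card_grid_interval M_gt0 ut_ge0 (Rlt_le _ _ vt_lt1); lra.
Qed.

Section Breakpoints.
Variables (n : nat) (a : nat -> R).
Hypothesis a_incr : forall i, (i < n)%N -> a i < a i.+1.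

Lemma breakpoints_le i j : (i <= j <= n)%N -> a i <= a j.
Proof.
move=> /andP[+ j_le]; elim: j j_le => [|j IH] j_le; first by rewrite leqn0 => /eqP ->; lra.
rewrite leq_eqVlt => /orP[/eqP -> | i_le]; first lra.
have := IH (ltnW j_le) i_le; have := a_incr j_le; lra.
Qed.

Lemma piece_unique i j y : (i < n)%N -> (j < n)%N ->
  a i < y <= a i.+1 -> a j < y <= a j.+1 -> i = j.
Proof.
move=> i_lt j_lt yi yj; case: (ltngtP i j) => // [ij | ji].
- by have := @breakpoints_le i.+1 j ltac:(lia); lra.
- by have := @breakpoints_le j.+1 i ltac:(lia); lra.
Qed.

Lemma find_piece x : a 0%N = 0 -> 0 < x <= a n -> exists2 i, (i < n)%N & a i < x <= a i.+1.
Proof.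
move=> a0 [x_gt0 x_le]; move: (leqnn n) x_le; elim: {1 3}n => [|m IH] m_le x_le; first lra.
case: (Rle_dec x (a m)) => [x_le' | x_gt]; last by exists m => //; lra.
by have [i i_lt xi] := IH (ltnW m_le) x_le'; exists i => //; apply: ltnW.
Qed.

End Breakpoints.

Lemma IET_displacements g : is_IET g -> exists T : seq R, forall x, 0 <= x < 1 -> g x - x \in T.
Proof.
case=> _ [_ [_ [n [a [t [a0 [an [a_incr g_piece]]]]]]]].
exists ((g 0 - 0) :: map t (iota 0 n)) => x x_in.
case: (Rle_lt_or_eq_dec 0 x (proj1 x_in)) => [x_gt0 | <-]; last exact: mem_head.
have [i i_lt xi] : exists2 i, (i < n)%N & a i < x <= a i.+1 by apply: find_piece => //; lra.
rewrite (g_piece i x) //; last lra.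
have -> : x + t i - x = t i by ring.
by rewrite inE map_f ?orbT // mem_iota.
Qed.

Lemma IET_moves_interval g : is_IET g -> (exists2 y, 0 <= y < 1 & g y <> y) ->
  exists p q, [/\ 0 <= p, p < q, q < 1 & forall y, p < y <= q -> g y <> y].
Proof.
case=> g_in [g_inj [_ [n [a [t [a0 [an [a_incr g_piece]]]]]]]] [y0 y0_in gy0].
(* Pieces (a i, a i.+1] only cover points > 0, so a moved 0 is traded for g 0. *)
have [y1 [y1_gt0 y1_lt1] gy1] : exists2 y1, 0 < y1 < 1 & g y1 <> y1.
  case: (Rle_lt_or_eq_dec 0 y0 (proj1 y0_in)) => [y0_gt0 | y0_eq0]; first by exists y0; lra.
  rewrite -y0_eq0 in y0_in gy0; have [gy0_ge0 gy0_lt1] := g_in 0 y0_in.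
  exists (g 0); last by move=> fixed; apply: gy0; apply: g_inj => //; lra.
  by split=> //; case: (Rle_lt_or_eq_dec _ _ gy0_ge0) => // /esym /gy0.
have [i i_lt yi] : exists2 i, (i < n)%N & a i < y1 <= a i.+1 by apply: find_piece => //; lra.
exists (a i), y1; split; try lra.
  by rewrite -a0; apply: (breakpoints_le a_incr); rewrite leq0n ltnW.
move=> y yi' gy; apply: gy1; rewrite (g_piece i y1) //; rewrite (g_piece i y) // in gy; lra.
Qed.

Definition grid_hits (g : R -> R) (p q : R) (M : nat) : {set 'I_M} :=
  [set i : 'I_M | pdec (exists2 y, p < y <= q & g y = INR i / INR M)].

(* g((p, q]) is the disjoint union of the translates of the clamped pieces of g,
   of total length q - p, and each translated interval misses at most one of the
   grid points it should contain. *)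
Lemma IET_card_grid_hits g p q : is_IET g -> 0 <= p -> p < q -> q < 1 ->
  exists B : nat, forall M, (0 < M)%N ->
    INR M * (q - p) - INR B <= INR #|grid_hits g p q M|.
Proof.
case=> g_in [g_inj [_ [n [a [t [a0 [an [a_incr g_piece]]]]]]]] p_ge0 pq q_lt1.
exists n => M M_gt0.
pose image j :=
  [set i : 'I_M | pdec (clamp p q (a j) + t j < INR i / INR M <= clamp p q (a j.+1) + t j)].
have image_piece j i : (j < n)%N -> i \in image j -> let y := INR i / INR M - t j in
    [/\ a j < y <= a j.+1, p < y <= q & g y = INR i / INR M].
  move=> j_lt; rewrite inE => /pdecP i_in y.
  have [yj ypq] : a j < y <= a j.+1 /\ p < y <= q by apply: clamp_interval; rewrite /y; lra.
  by split=> //; rewrite (g_piece j y) //; [rewrite /y; ring | lra].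
have image_sub j : (j < n)%N -> image j \subset grid_hits g p q M.
  move=> j_lt; apply/subsetP => i /(image_piece j i j_lt) [_ ypq gy].
  by rewrite inE; apply/pdecP; exists (INR i / INR M - t j).
have image_disjoint j k i : (j < n)%N -> (k < n)%N -> i \in image j -> i \in image k -> j = k.
  move=> j_lt k_lt /(image_piece j i j_lt) [yj yj_pq gyj] /(image_piece k i k_lt) [yk yk_pq gyk].
  apply: (piece_unique a_incr j_lt k_lt yj).
  rewrite (_ : INR i / INR M - t j = INR i / INR M - t k) //.
  by apply: g_inj; rewrite ?gyj ?gyk; lra.
have image_card j : (j < n)%N ->
    INR M * (clamp p q (a j.+1) - clamp p q (a j)) - 1 <= INR #|image j|.
  move=> j_lt; apply: card_grid_translate => // y yh.
  have [yj ypq] := clamp_interval (Rlt_le _ _ pq) yh.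
  by rewrite -(g_piece j y) //; [apply: g_in | ]; lra.
have union_card m : (m <= n)%N ->
    INR M * (clamp p q (a m) - clamp p q (a 0%N)) - INR m <= INR #|\bigcup_(j < m) image j|.
  elim: m => [|m IH] m_le; first by rewrite big_ord0 cards0 /=; lra.
  rewrite S_INR big_ord_recr cardsU /=.
  have -> : (\bigcup_(j < m) image j) :&: image m = set0.
    apply/setP => i; rewrite in_setI in_set0; apply/negbTE/andP => -[/bigcupP [j _ ij] im].
    have := image_disjoint j m i (ltn_trans (ltn_ord j) m_le) m_le ij im.
    by move: (ltn_ord j) => /[swap] ->; rewrite ltnn.
  rewrite cards0 subn0 plus_INR.
  apply: Rle_trans _ (Rplus_le_compat _ _ _ _ (IH (ltnW m_le)) (image_card m m_le)); lra.
have union_sub : \bigcup_(j < n) image j \subset grid_hits g p q M.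
  by apply/bigcupsP => j _; apply: image_sub.
apply: Rle_trans (le_INR _ _ (leP (subset_leq_card union_sub))).
apply: Rle_trans (union_card n (leqnn n)).
rewrite an a0 (@clamp_left p q 0) ?(@clamp_right p q 1); lra.
Qed.

Lemma IET_family_card_grid_hits (G : nat -> R -> R) p q N :
  (forall k, is_IET (G k)) -> 0 <= p -> p < q -> q < 1 ->
  exists B : nat, forall k M, (k < N)%N -> (0 < M)%N ->
    INR M * (q - p) - INR B <= INR #|grid_hits (G k) p q M|.
Proof.
move=> G_IET p_ge0 pq q_lt1; elim: N => [|N [B IH]]; first by exists 0%N.
have [B' HB'] := IET_card_grid_hits (G_IET N) p_ge0 pq q_lt1.
exists (maxn B B') => k M k_le M_gt0.
have := le_INR _ _ (leP (leq_maxl B B')); have := le_INR _ _ (leP (leq_maxr B B')).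
rewrite ltnS leq_eqVlt in k_le; case/orP: k_le => [/eqP -> | k_lt].
- by have := HB' M M_gt0; lra.
- by have := IH k M k_lt M_gt0; lra.
Qed.

Lemma exists_nat_mul_ge (l c : R) : 0 < l -> exists2 Q : nat, (0 < Q)%N & c <= INR Q * l.
Proof.
move=> l_gt0; have [n n_gt] := INR_unbounded (c / l).
exists n.+1 => //; rewrite S_INR.
have : c / l * l = c by field; lra.
have := pos_INR n; nra.
Qed.

Lemma exp_dominates_poly C r : exists M, ((C * M).+1 ^ r < 2 ^ M)%N.
Proof.
(* (C M + 1)^r <= ((C + 1) M)^r <= 2^((C + 2t) r) < 2^M for M = 2^(2t). *)
set t := (C + 2 * r + 1)%N; exists (2 ^ (2 * t))%N; set M := (2 ^ (2 * t))%N.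
have M_gt0 : (0 < M)%N by rewrite expn_gt0.
have lin_lt : ((C + 2 * t) * r < M)%N.
  have : (t.+1 * t.+1 <= M)%N by rewrite /M mulnC expnM -mulnn leq_mul // ltn_expl.
  rewrite /t; nia.
have pow_le m n : (m <= n)%N -> (m ^ r <= n ^ r)%N.
  by move=> mn; elim: r {t M M_gt0 lin_lt} => // e IH; rewrite !expnS leq_mul.
apply: (@leq_ltn_trans (((C + 1) * M) ^ r)); first by apply: pow_le; nia.
rewrite expnMn {2}/M -expnM; apply: (@leq_ltn_trans (2 ^ (C * r) * 2 ^ (2 * t * r))).
  by rewrite leq_mul // expnM pow_le // addn1 ltn_expl.
by rewrite -expnD ltn_exp2l // -mulnDl.
Qed.

Lemma exists_ge_average (M : nat) (i0 : 'I_M) (X : 'I_M -> nat) :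
  exists i, (\sum_j X j <= M * X i)%N.
Proof.
case: (@arg_maxnP _ i0 xpredT X isT) => i _ i_max; exists i.
have -> : (M * X i = \sum_(j : 'I_M) X i)%N by rewrite sum_nat_const card_ord.
by apply: leq_sum => j _; apply: i_max.
Qed.

Lemma INR_sum_ge_const (n : nat) (X : 'I_n -> nat) (c : R) :
  (forall k, c <= INR (X k)) -> INR n * c <= INR (\sum_k X k).
Proof.
elim: n X => [|n IH] X X_ge; first by rewrite big_ord0 /=; lra.
rewrite big_ord_recr plus_INR S_INR.
by apply: Rle_trans _ (Rplus_le_compat _ _ _ _ (IH _ (fun k => X_ge _)) (X_ge ord_max)); lra.
Qed.

Lemma sum_card_sets_exchange (A B : finType) (P : A -> B -> bool) :
  (\sum_a #|[set b | P a b]| = \sum_b #|[set a | P a b]|)%N.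
Proof.
rewrite (eq_bigr _ (fun a _ => card_set_sum (P a))) exchange_big.
by apply: eq_bigr => b _; rewrite card_set_sum.
Qed.

Definition sum_of_at_most (T : seq R) (L : nat) (y : R) : Prop :=
  exists v : 'I_(size T) -> nat,
    (\sum_j v j <= L)%N /\ y = \big[Rplus/0]_j (INR (v j) * nth 0 T j).

Lemma sum_of_at_most0 T : sum_of_at_most T 0 0.
Proof.
exists (fun _ => 0%N); split; first by rewrite sum_nat_const muln0.
by rewrite big1 // => j _; rewrite Rmult_0_l.
Qed.

Lemma sum_of_at_most_mem T t : t \in T -> sum_of_at_most T 1 t.
Proof.
rewrite -index_mem => t_idx; set j0 := Ordinal t_idx.
exists (fun j => (j == j0) : nat); split.
  by rewrite (bigD1 j0) //= eqxx big1 // => j /negbTE ->.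
rewrite (bigD1 j0) //= eqxx big1 => [|j /negbTE -> /=]; last by rewrite Rmult_0_l.
by rewrite Rmult_1_l Rplus_0_r nth_index // -index_mem.
Qed.

Lemma sum_of_at_most_add T L1 L2 y1 y2 :
  sum_of_at_most T L1 y1 -> sum_of_at_most T L2 y2 -> sum_of_at_most T (L1 + L2) (y1 + y2).
Proof.
move=> [v1 [v1L ->]] [v2 [v2L ->]]; exists (fun j => v1 j + v2 j)%N; split.
  by rewrite big_split leq_add.
by rewrite -big_split; apply: eq_bigr => j _; rewrite plus_INR Rmult_plus_distr_r.
Qed.

Lemma card_sum_of_at_most (A : finType) (D : {set A}) (point : A -> R) (x : R) T L :
  {in D &, injective point} -> (forall s, s \in D -> sum_of_at_most T L (point s - x)) ->
  (#|D| <= L.+1 ^ size T)%N.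
Proof.
move=> point_inj short.
have v_ex s : exists v : 'I_(size T) -> nat, s \in D ->
    (\sum_j v j <= L)%N /\ point s - x = \big[Rplus/0]_j (INR (v j) * nth 0 T j).
  by case: (boolP (s \in D)) => [/short [v vs] | sD]; [exists v | exists (fun _ => 0%N)].
have [v v_spec] := fin_all_exists v_ex.
have v_le s j : s \in D -> (v s j <= L)%N.
  by move=> /v_spec [sL _]; apply: leq_trans sL; rewrite (bigD1 j) //= leq_addr.
pose w s : {ffun 'I_(size T) -> 'I_L.+1} := [ffun j => inord (v s j)].
have -> : (L.+1 ^ size T = #|{ffun 'I_(size T) -> 'I_L.+1}|)%N by rewrite card_ffun !card_ord.
apply: (@leq_card_in _ _ w) => s1 s2 s1D s2D w12.
apply: point_inj => //.
have v12 j : v s1 j = v s2 j.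
  have := congr1 (fun f : {ffun 'I_(size T) -> 'I_L.+1} => nat_of_ord (f j)) w12.
  by rewrite /= !ffunE !inordK // ltnS v_le.
have [_ e1] := v_spec s1 s1D; have [_ e2] := v_spec s2 s2D.
have : point s1 - x = point s2 - x by rewrite e1 e2; apply: eq_bigr => j _; rewrite v12.
lra.
Qed.

Section Configurations.
Variable gT : finGroupType.

Definition conf1 : Z -> gT := fun _ => 1%g.
Definition lamp (k : Z) (c : gT) : Z -> gT := fun i => if i == k then c else 1%g.
Definition confM (f g : Z -> gT) : Z -> gT := fun i => (f i * g i)%g.
Definition confV (f : Z -> gT) : Z -> gT := fun i => (f i)^-1%g.

Lemma finsupp_conf1 : finsupp conf1.
Proof. by exists 0%Z. Qed.

Lemma finsupp_lamp k c : finsupp (lamp k c).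
Proof. by exists (Z.abs k) => i i_gt; rewrite /lamp; case: eqP => // ik; exfalso; lia. Qed.

Lemma finsupp_confM f g : finsupp f -> finsupp g -> finsupp (confM f g).
Proof.
by move=> [Nf f1] [Ng g1]; exists (Z.max Nf Ng) => i i_gt; rewrite /confM f1 ?g1 ?mulg1 //; lia.
Qed.

Lemma finsupp_confV f : finsupp f -> finsupp (confV f).
Proof. by move=> [N f1]; exists N => i i_gt; rewrite /confV f1 ?invg1. Qed.

Lemma finsupp_shift (f : Z -> gT) m : finsupp f -> finsupp (fun i => f (i - m)%Z).
Proof. by move=> [N f1]; exists (N + Z.abs m)%Z => i i_gt; apply: f1; lia. Qed.

Lemma confM1 f : confM f conf1 = f.
Proof. by apply: functional_extensionality => i; rewrite /confM mulg1. Qed.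

Lemma confMV f : confM f (confV f) = conf1.
Proof. by apply: functional_extensionality => i; rewrite /confM /confV mulgV. Qed.

Definition lamps_on (N : nat) (c : gT) (S : {set 'I_N}) : Z -> gT :=
  fun i => if [exists k in S, Z.of_nat k == i] then c else 1%g.

Lemma lamps_on_ord N c (S : {set 'I_N}) (k : 'I_N) :
  lamps_on c S (Z.of_nat k) = if k \in S then c else 1%g.
Proof.
rewrite /lamps_on; case: (boolP (k \in S)) => kS.
  by case: existsP => // -[]; exists k; rewrite kS /=.
case: existsP => // -[k' /andP [k'S /eqP /Nat2Z.inj k'k]].
by move: kS; rewrite -(val_inj k'k) k'S.
Qed.

Lemma lamps_on_out N c (S : {set 'I_N}) i : (i < 0 \/ Z.of_nat N <= i)%Z -> lamps_on c S i = 1%g.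
Proof.
move=> out; rewrite /lamps_on; case: existsP => // -[k /andP [_ /eqP ki]].
by have := ltn_ord k; move/ltP; lia.
Qed.

Lemma finsupp_lamps_on N c (S : {set 'I_N}) : finsupp (lamps_on c S).
Proof. by exists (Z.of_nat N) => i i_gt; apply: lamps_on_out; lia. Qed.

Lemma Z_ord_or_out N (i : Z) : (exists k : 'I_N, i = Z.of_nat k) \/ (i < 0 \/ Z.of_nat N <= i)%Z.
Proof.
case: (Z_lt_le_dec i 0) => [|i_ge0]; first by right; left.
case: (Z_lt_le_dec i (Z.of_nat N)) => [i_lt|]; last by right; right.
have k_lt : (Z.to_nat i < N)%N by apply/ltP; lia.
by left; exists (Ordinal k_lt) => /=; lia.
Qed.

End Configurations.
Arguments conf1 {gT}.
Arguments finsupp_conf1 {gT}.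
#[local] Hint Resolve finsupp_conf1 finsupp_lamp : core.

Section WreathEmbedding.
Variables (gT : finGroupType) (phi : (Z -> gT) -> Z -> R -> R).
Hypothesis phi_IET : forall f m, finsupp f -> is_IET (phi f m).
Hypothesis phiM : forall f m g n, finsupp f -> finsupp g -> forall x, 0 <= x < 1 ->
  phi (wr_mul_fun f m g) (m + n) x = phi f m (phi g n x).

Lemma phi_in01 f m x : finsupp f -> 0 <= x < 1 -> 0 <= phi f m x < 1.
Proof. by move=> /(phi_IET m) [+ _]; apply. Qed.

Lemma phi_inj f m x y : finsupp f -> 0 <= x < 1 -> 0 <= y < 1 ->
  phi f m x = phi f m y -> x = y.
Proof. by move=> /(phi_IET m) [_ [+ _]]; apply. Qed.

Lemma phi_ext f g m x : (forall i, f i = g i) -> phi f m x = phi g m x.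
Proof. by move=> /functional_extensionality ->. Qed.

Lemma phi_confM f g x : finsupp f -> finsupp g -> 0 <= x < 1 ->
  phi (confM f g) 0 x = phi f 0 (phi g 0 x).
Proof.
move=> fs gs x_in; rewrite -phiM //.
by apply: phi_ext => i; rewrite /wr_mul_fun Z.sub_0_r.
Qed.

Lemma phi_conf1 x : 0 <= x < 1 -> phi conf1 0 x = x.
Proof.
move=> x_in; apply: (phi_inj (m := 0%Z) finsupp_conf1 (phi_in01 0 finsupp_conf1 x_in) x_in).
by rewrite -phi_confM ?confM1.
Qed.

Lemma phi_confV_fix u x : finsupp u -> 0 <= x < 1 -> phi u 0 x = x -> phi (confV u) 0 x = x.
Proof.
move=> us x_in ux; have Vus := finsupp_confV us.
apply: (phi_inj (m := 0%Z) us (phi_in01 0 Vus x_in) x_in).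
by rewrite ux -phi_confM // confMV phi_conf1.
Qed.

Lemma phi_shift f x : finsupp f -> 0 <= x < 1 ->
  phi (fun i => f (i - 1)%Z) 0 x = phi conf1 1 (phi f 0 (phi conf1 (-1) x)).
Proof.
move=> fs x_in; have y_in := phi_in01 (-1) finsupp_conf1 x_in.
have E1 : wr_mul_fun conf1 1 f = (fun i => f (i - 1)%Z).
  by apply: functional_extensionality => i; rewrite /wr_mul_fun mul1g.
have E2 : wr_mul_fun (fun i => f (i - 1)%Z) 1 conf1 = (fun i => f (i - 1)%Z).
  by apply: functional_extensionality => i; rewrite /wr_mul_fun mulg1.
rewrite -(phiM 1 0 finsupp_conf1 fs y_in) E1 Z.add_0_r.
by rewrite -(phiM 1 (-1) (finsupp_shift 1 fs) finsupp_conf1 x_in) E2.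
Qed.

Lemma phi_lamp_shift k c y : 0 <= y < 1 ->
  phi (lamp k c) 0 (phi conf1 k y) = phi conf1 k (phi (lamp 0 c) 0 y).
Proof.
move=> y_in; rewrite -(phiM 0 k (finsupp_lamp k c) finsupp_conf1 y_in).
rewrite -(phiM k 0 finsupp_conf1 (finsupp_lamp 0 c) y_in) Z.add_0_r Z.add_0_l.
apply: phi_ext => i; rewrite /wr_mul_fun /conf1 /lamp mulg1 mul1g.
by case: eqP; case: eqP => // *; exfalso; lia.
Qed.

Definition displacement_set (T : seq R) : Prop :=
  [/\ forall c x, 0 <= x < 1 -> phi (lamp 0 c) 0 x - x \in T,
      forall x, 0 <= x < 1 -> phi conf1 1 x - x \in T &
      forall x, 0 <= x < 1 -> phi conf1 (-1) x - x \in T].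

Lemma exists_displacement_set : exists T, displacement_set T.
Proof.
have [Tlamp Tlamp_spec] :=
  fin_all_exists (fun c : gT => IET_displacements (phi_IET 0 (finsupp_lamp 0 c))).
have [T1 T1_spec] := IET_displacements (phi_IET 1 finsupp_conf1).
have [T2 T2_spec] := IET_displacements (phi_IET (-1) finsupp_conf1).
exists (flatten (map Tlamp (enum gT)) ++ T1 ++ T2).
split=> [c x x_in | x x_in | x x_in]; rewrite !mem_cat.
- by apply/orP; left; apply/flatten_mapP; exists c; rewrite ?mem_enum ?Tlamp_spec.
- by rewrite T1_spec ?orbT.
- by rewrite T2_spec ?orbT.
Qed.

(* With rho = id the completion w of c is supported in [k, +oo), with
   rho = Z.opp in (-oo, k]. *)
Definition fixable (x : R) (rho : Z -> Z) (c : gT) (k : Z) : Prop :=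
  exists w, [/\ finsupp w, forall i, (rho i < rho k)%Z -> w i = 1%g, w k = c & phi w 0 x = x].

Lemma phi_lamp_commg_fix a b k x : 0 <= x < 1 ->
  fixable x id a k -> fixable x Z.opp b k -> phi (lamp k [~ a, b]) 0 x = x.
Proof.
move=> x_in [w [ws w_low wk wx]] [v [vs v_high vk vx]].
have Vws := finsupp_confV ws; have Vvs := finsupp_confV vs; have wvs := finsupp_confM ws vs.
have Vvwvs := finsupp_confM Vvs wvs.
rewrite (@phi_ext _ (confM (confV w) (confM (confV v) (confM w v)))) => [|i].
  rewrite !phi_confM // vx wx.
  by rewrite (phi_confV_fix vs x_in vx) (phi_confV_fix ws x_in wx).
rewrite /lamp /confM /confV; case: eqP => [-> | ik]; first by rewrite wk vk.
case: (Z_lt_ge_dec i k) => [i_lt | i_ge]; first by rewrite w_low // invg1 !mul1g mulVg.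
by rewrite v_high /=; [rewrite invg1 mul1g mulg1 mulVg | lia].
Qed.

(* If S and S' differ, compare them at the mu-least position k0 where they do:
   the quotient of the two configurations fixes x, is trivial rho-before k0 and
   carries c or c^-1 at k0, so k0 would be fixable. *)
Lemma lamps_on_inj N x c (rho : Z -> Z) (mu : 'I_N -> nat) (K : {set 'I_N}) :
  0 <= x < 1 ->
  (forall k k', (mu k <= mu k')%N -> (rho (Z.of_nat k) <= rho (Z.of_nat k'))%Z) ->
  (forall k, k \in K -> ~ fixable x rho c (Z.of_nat k)) ->
  {in powerset K &, injective (fun S => phi (lamps_on c S) 0 x)}.
Proof.
move=> x_in mu_rho unfixable S S'; rewrite !powersetE => SK S'K /= eq_x.
set D := (S :\: S') :|: (S' :\: S).
case: (pickP (mem D)) => [k1 k1D | D0]; last first.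
  by apply/setP => k; move: (D0 k); rewrite /= !inE; case: (k \in S); case: (k \in S').
case: (arg_minnP mu k1D) => k0 k0D k0_min; exfalso.
have k0K : k0 \in K.
  by move: k0D; rewrite !inE => /orP [/andP [_ /(subsetP SK)] | /andP [_ /(subsetP S'K)]].
apply: (unfixable k0 k0K).
pose u := confM (confV (lamps_on c S')) (lamps_on c S).
have S's := finsupp_lamps_on c S'.
have us : finsupp u by apply: finsupp_confM (finsupp_confV S's) (finsupp_lamps_on c S).
have ux : phi u 0 x = x.
  apply: (phi_inj (m := 0%Z) S's (phi_in01 0 us x_in) x_in).
  rewrite -phi_confM // -eq_x; apply: phi_ext => i; exact: mulKVg.
have u_low i : (rho i < rho (Z.of_nat k0))%Z -> u i = 1%g.
  rewrite /u /confM /confV.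
  case: (Z_ord_or_out N i) => [[k ->] | out] i_lt; last by rewrite !lamps_on_out // invg1 mulg1.
  rewrite !lamps_on_ord; case: (boolP (k \in D)) => [kD | kD].
    by move: (mu_rho _ _ (k0_min k kD)) => k0_le; exfalso; lia.
  by move: kD; rewrite !inE; case: (k \in S); case: (k \in S') => //= _; rewrite mulVg.
move: k0D; rewrite !inE => /orP [/andP [k0S' k0S] | /andP [k0S k0S']].
- exists u; split=> //.
  by rewrite /u /confM /confV !lamps_on_ord (negbTE k0S') k0S invg1 mul1g.
- exists (confV u); split; [exact: finsupp_confV | | | exact: phi_confV_fix].
  + by move=> i /u_low; rewrite /confV => ->; rewrite invg1.
  + by rewrite /confV /u /confM /confV !lamps_on_ord k0S' (negbTE k0S) mulg1 invgK.
Qed.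

Section Displacements.
Variable T : seq R.
Hypothesis T_disp : displacement_set T.

Lemma sum_of_at_most_displacement n f x :
  (forall i, (i < 0 \/ Z.of_nat n <= i)%Z -> f i = 1%g) -> 0 <= x < 1 ->
  sum_of_at_most T (3 * n) (phi f 0 x - x).
Proof.
case: T_disp => T_lamp T_right T_left.
elim: n f x => [|n IH] f x f_supp x_in.
  rewrite (@phi_ext f conf1) ?phi_conf1 => [|//|i]; last by apply: f_supp; lia.
  by rewrite Rminus_diag; apply: sum_of_at_most0.
pose f' i := if (i + 1)%Z == 0%Z then 1%g else f (i + 1)%Z.
have f'_supp i : (i < 0 \/ Z.of_nat n <= i)%Z -> f' i = 1%g.
  by move=> i_out; rewrite /f'; case: eqP => // i_ne; apply: f_supp; lia.
have f'_fs : finsupp f' by exists (Z.of_nat n) => i ?; apply: f'_supp; lia.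
(* f is the lamp f 0 at 0 times the conjugate by the shift of f', the rest of f
   moved one step to the left. *)
have f_split : phi f 0 x = phi (lamp 0 (f 0%Z)) 0 (phi conf1 1 (phi f' 0 (phi conf1 (-1) x))).
  rewrite -phi_shift // -phi_confM //; last exact: finsupp_shift.
  apply: phi_ext => i; rewrite /confM /lamp /f' Z.sub_add.
  by case: eqP => [-> | _]; rewrite ?mulg1 ?mul1g.
have x1_in := phi_in01 (-1) finsupp_conf1 x_in.
have x2_in := phi_in01 0 f'_fs x1_in.
have x3_in := phi_in01 1 finsupp_conf1 x2_in.
rewrite f_split; set x1 := phi conf1 (-1) x; set x2 := phi f' 0 x1; set x3 := phi conf1 1 x2.
have -> : phi (lamp 0 (f 0%Z)) 0 x3 - x =
    (phi (lamp 0 (f 0%Z)) 0 x3 - x3) + ((x3 - x2) + ((x2 - x1) + (x1 - x))) by ring.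
have -> : (3 * n.+1 = 1 + (1 + (3 * n + 1)))%N by lia.
apply: sum_of_at_most_add; first exact/sum_of_at_most_mem/T_lamp.
apply: sum_of_at_most_add; first exact/sum_of_at_most_mem/T_right.
apply: sum_of_at_most_add; first exact: IH.
exact/sum_of_at_most_mem/T_left.
Qed.

Lemma card_unfixable N x c rho (mu : 'I_N -> nat) (K : {set 'I_N}) : 0 <= x < 1 ->
  (forall k k', (mu k <= mu k')%N -> (rho (Z.of_nat k) <= rho (Z.of_nat k'))%Z) ->
  (forall k, k \in K -> ~ fixable x rho c (Z.of_nat k)) ->
  (2 ^ #|K| <= (3 * N).+1 ^ size T)%N.
Proof.
move=> x_in mu_rho unfixable; rewrite -card_powerset.
apply: (card_sum_of_at_most (lamps_on_inj x_in mu_rho unfixable)) => S _.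
by apply: sum_of_at_most_displacement => // i; apply: lamps_on_out.
Qed.

Lemma card_moving_lamps N x a b (K : {set 'I_N}) : 0 <= x < 1 ->
  (forall k, k \in K -> phi (lamp (Z.of_nat k) [~ a, b]) 0 x != x) ->
  (2 ^ #|K| <= ((3 * N).+1 ^ size T) ^ 2)%N.
Proof.
move=> x_in moving.
pose KA := [set k in K | pdec (~ fixable x id a (Z.of_nat k))].
pose KB := [set k in K | pdec (~ fixable x Z.opp b (Z.of_nat k))].
have K_sub : K \subset KA :|: KB.
  apply/subsetP => k kK; rewrite !inE kK /=; apply/orP.
  have [fa | nfa] := pdecP (fixable x id a (Z.of_nat k)); last by left; apply/pdecP.
  have [fb | nfb] := pdecP (fixable x Z.opp b (Z.of_nat k)); last by right; apply/pdecP.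
  by have := moving k kK; rewrite (phi_lamp_commg_fix x_in fa fb) eqxx.
have cardA : (2 ^ #|KA| <= (3 * N).+1 ^ size T)%N.
  apply: (card_unfixable (c := a) (rho := id) (mu := @nat_of_ord N) x_in) => [k k' | k]; first lia.
  by rewrite inE => /andP [_ /pdecP].
have cardB : (2 ^ #|KB| <= (3 * N).+1 ^ size T)%N.
  apply: (card_unfixable (c := b) (rho := Z.opp) (mu := fun k : 'I_N => (N - k)%N) x_in).
    by move=> k k'; have := ltn_ord k; have := ltn_ord k'; lia.
  by move=> k; rewrite inE => /andP [_ /pdecP].
apply: (@leq_trans (2 ^ (#|KA| + #|KB|))).
  by rewrite leq_exp2l // (leq_trans (subset_leq_card K_sub)) // cardsU leq_subr.
by rewrite expnD (expnS _ 1) expn1 leq_mul.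
Qed.

End Displacements.

Lemma many_lamps_move_a_point c p q N : 0 <= p -> p < q -> q < 1 ->
  (forall y, p < y <= q -> phi (lamp 0 c) 0 y <> y) ->
  exists2 x, 0 <= x < 1 &
    INR N * (q - p) / 2 <= INR #|[set k : 'I_N | phi (lamp (Z.of_nat k) c) 0 x != x]|.
Proof.
move=> p_ge0 pq q_lt1 moved.
have [B hits] := IET_family_card_grid_hits N (fun k => phi_IET (Z.of_nat k) finsupp_conf1)
  p_ge0 pq q_lt1.
have [Q Q_gt0 Ql] := @exists_nat_mul_ge (q - p) 2 ltac:(lra).
set M := (Q * B.+1)%N; have M_gt0 : (0 < M)%N by rewrite muln_gt0 Q_gt0.
pose moves (k : 'I_N) (i : 'I_M) := phi (lamp (Z.of_nat k) c) 0 (INR i / INR M) != INR i / INR M.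
have per_lamp k : INR M * (q - p) / 2 <= INR #|[set i | moves k i]|.
  have sub : grid_hits (phi conf1 (Z.of_nat k)) p q M \subset [set i | moves k i].
    apply/subsetP => i; rewrite !inE /moves => /pdecP [y y_pq <-]; apply/eqP.
    have y_in : 0 <= y < 1 by lra.
    rewrite phi_lamp_shift //.
    by move/(phi_inj finsupp_conf1 (phi_in01 0 (finsupp_lamp 0 c) y_in) y_in); apply: moved.
  apply: Rle_trans (le_INR _ _ (leP (subset_leq_card sub))).
  apply: Rle_trans (hits k M (ltn_ord k) M_gt0).
  have := Rmult_le_compat_l (INR B.+1) _ _ (pos_INR _) Ql.
  have : INR M * (q - p) = INR B.+1 * (INR Q * (q - p)) by rewrite /M mult_INR; ring.
  by rewrite S_INR; lra.
have [i i_max] := exists_ge_average (Ordinal M_gt0) (fun i => #|[set k | moves k i]|).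
exists (INR i / INR M); first exact: grid_point_in01.
have total := INR_sum_ge_const per_lamp; rewrite sum_card_sets_exchange in total.
have avg : INR N * (INR M * (q - p) / 2) <= INR M * INR #|[set k | moves k i]|.
  by apply: Rle_trans total _; rewrite -mult_INR; apply/le_INR/leP.
apply: (Rmult_le_reg_l (INR M)); first exact: lt_0_INR (ltP M_gt0).
by apply: Rle_trans _ avg; lra.
Qed.

Hypothesis phi_faithful : forall f m g n, finsupp f -> finsupp g ->
  (forall x, 0 <= x < 1 -> phi f m x = phi g n x) -> (forall i, f i = g i) /\ m = n.

Lemma lamp_moves_somewhere c : c != 1%g -> exists2 y, 0 <= y < 1 & phi (lamp 0 c) 0 y <> y.
Proof.
move=> c_ne1; case: (pdecP (exists2 y, 0 <= y < 1 & phi (lamp 0 c) 0 y <> y)) => // none.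
have fixed y : 0 <= y < 1 -> phi (lamp 0 c) 0 y = phi conf1 0 y.
  move=> y_in; rewrite phi_conf1 //; case: (Req_EM_T (phi (lamp 0 c) 0 y) y) => // moved.
  by case: none; exists y.
have [/(_ 0%Z) lamp0 _] := phi_faithful (finsupp_lamp 0 c) finsupp_conf1 fixed.
by move: c_ne1; rewrite /lamp eqxx in lamp0; rewrite lamp0 eqxx.
Qed.

Lemma wreath_embedding_commute (a b : gT) : commute a b.
Proof.
apply/commgP; apply/negPn/negP => comm_ne1.
have [p [q [p_ge0 pq q_lt1 moved]]] :=
  IET_moves_interval (phi_IET 0 (finsupp_lamp 0 [~ a, b])) (lamp_moves_somewhere comm_ne1).
have [T T_disp] := exists_displacement_set.
have [Q Q_gt0 Ql] := @exists_nat_mul_ge (q - p) 2 ltac:(lra).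
have [M poly_lt] := exp_dominates_poly (3 * Q) (size T * 2).
have [x x_in] := many_lamps_move_a_point (Q * M) p_ge0 pq q_lt1 moved.
set K := [set k | _] => many.
have M_le : (M <= #|K|)%N.
  apply/leP/INR_le; apply: Rle_trans many; rewrite mult_INR.
  by have := pos_INR M; nra.
have card_le : (2 ^ #|K| <= ((3 * (Q * M)).+1 ^ size T) ^ 2)%N.
  by apply: (card_moving_lamps (a := a) (b := b) T_disp x_in) => k; rewrite inE.
(* 2^M <= 2^|K| <= (3QM + 1)^(2r) < 2^M *)
have := leq_trans (leq_pexp2l (isT : (0 < 2)%N) M_le) card_le.
by rewrite -expnM mulnA leqNgt poly_lt.
Qed.

End WreathEmbedding.

Theorem mainTheorem3 (gT : finGroupType) (nonab : ~~ abelian [set: gT]) :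
  ~ wreath_Z_embeds_in_IET gT.
Proof.
move=> [phi [phi_IET [phiM phi_faithful]]].
move/negP: nonab; apply; apply/centsP => a _ b _.
exact: (wreath_embedding_commute phi_IET phiM phi_faithful).
Qed.
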